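(* Let $K_4$ be the complete graph on $4$ vertices. The $3$-uniform power hypergraph $K_4^{(3)}$ has the eigenvalue $5^{1/3}$ (the real cube root of $5$), whereas no induced subgraph of $K_4$ has an eigenvalue $\beta$ with $\beta^2=5$. (In particular, the statement ''$\lambda$ is an eigenvalue of $G^{(3)}$ iff some induced subgraph of $G$ has an eigenvalue $\beta$ with $\beta^2=\lambda^3$'' is false.)
   Context: Tensor eigenvalues: for a $k$-order $n$-dimensional tensor $T=(t_{i_1\cdots i_k})$, $\lambda\in\mathbb{C}$ is an eigenvalue if there is $\mathbf{x}\ne 0$ with $\sum_{i_2,\dots,i_k}t_{ii_2\cdots i_k}x_{i_2}\cdots x_{i_k}=\lambda x_i^{k-1}$ for all $i$. The adjacency tensor of a $k$-uniform hypergraph has entry $\frac1{(k-1)!}$ at $(i_1,\dots,i_k)$ if $\{i_1,\dots,i_k\}$ is an edge and $0$ otherwise; eigenvalues of the hypergraph are those of this tensor. The $k$-power hypergraph $G^{(k)}$ of a graph $G$ is the $k$-uniform hypergraph obtained by adding $k-2$ new vertices to each edge of $G$, with distinct edges receiving disjoint sets of new vertices. Eigenvalues of a graph are eigenvalues of its adjacency matrix. *)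

From HB Require Import structures.
From mathcomp Require Import all_boot all_order all_algebra all_field.
Set Implicit Arguments. Unset Strict Implicit. Unset Printing Implicit Defensive.
Import Order.TTheory GRing.Theory Num.Theory.
Local Open Scope ring_scope.

(* Simple graphs: a symmetric irreflexive relation on a finite vertex type. *)
Section Graphs.
Variables (V : finType) (G : rel V).

Definition gedges : {set {set V}} :=
  [set e | [exists x, exists y, G x y && (e == [set x; y])]].

(* vertex type of the k-power hypergraph G^(k): the old vertices plus,
   for every edge e of G, k-2 new vertices (e, j), j < k-2. *)
Definition pvert (k : nat) : finType :=
  (V + {p : {set V} * 'I_(k - 2) | p.1 \in gedges})%type.

Definition pedge (k : nat) (e : {set V}) : {set pvert k} :=
  [set v : pvert k | match v with
                     | inl x => x \in e
                     | inr q => (sval q).1 == e end].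

Definition power_edges (k : nat) : {set {set pvert k}} :=
  [set pedge k e | e in gedges].

Definition induced_adj (C : numClosedFieldType) (S : {set V}) : 'M[C]_#|S| :=
  \matrix_(i, j) (G (enum_val i) (enum_val j))%:R.

End Graphs.

Section Hypergraphs.
Variables (C : numClosedFieldType) (W : finType) (E : {set {set W}}) (k : nat).

(* entry t_{i i_2 ... i_k} of the adjacency tensor, with (i_2,...,i_k) = f *)
Definition adjT (i : W) (f : {ffun 'I_k.-1 -> W}) : C :=
  if (i |: [set f j | j in 'I_k.-1]) \in E then ((k.-1)`!%:R)^-1 else 0.

Definition hyp_eigenvalue (lam : C) : Prop :=
  exists x : W -> C, (exists v, x v != 0) /\
    forall i : W,
      \sum_(f : {ffun 'I_k.-1 -> W}) adjT i f * \prod_(j < k.-1) x (f j)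
      = lam * x i ^+ k.-1.

End Hypergraphs.

Definition K4 : rel 'I_4 := fun x y => x != y.

From HB Require Import structures.
From mathcomp Require Import all_boot all_order all_algebra all_field.
From mathcomp Require Import ring zify.
Set Implicit Arguments.
Unset Strict Implicit.
Unset Printing Implicit Defensive.
Import Order.TTheory GRing.Theory Num.Theory.
Local Open Scope ring_scope.

(* Part 1 is a lifting construction valid for any graph G.  For a 3-uniform
   hypergraph, contracting the adjacency tensor against x (x) x gives, at a
   vertex i, the sum over edges e through i of the product of x on e \ {i};
   for the power hypergraph G^(3) this turns the eigen-equations into one
   equation per old vertex and one per edge of G.  These are solved by a
   cube-root substitution from any eigenvector of a signed adjacency matrix
   of G: an eigenvalue mu^3 of a signing of G yields the eigenvalue mu^2 of
   G^(3).  Signing the edge {0, 1} of K_4 negatively gives a matrix with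
   eigenvalue sqrt 5 = mu^3 for mu^2 = 5^(1/3).

   Part 2: every induced subgraph of K_4 is a complete graph K_m, whose
   eigenvalues are -1 and m - 1, and sqrt 5 - 1 is not a natural number. *)

Section ThreeUniform.
Variables (C : numClosedFieldType) (W : finType).

Definition ffun_pair (w1 w2 : W) : {ffun 'I_2 -> W} :=
  [ffun j => if j == ord0 then w1 else w2].

Lemma sum_ffun_pair (F : {ffun 'I_2 -> W} -> C) :
  \sum_f F f = \sum_w1 \sum_w2 F (ffun_pair w1 w2).
Proof.
rewrite pair_big /= (reindex (fun p : W * W => ffun_pair p.1 p.2)) //=.
exists (fun f : {ffun 'I_2 -> W} => (f ord0, f ord_max)) => [[w1 w2] _|f _].
  by rewrite /= !ffunE.
apply/ffunP => j; rewrite ffunE; case: ifP => [/eqP-> //|].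
by case: j => [[|[|//]] Hj] //= _; congr (f _); apply: val_inj.
Qed.

Lemma ffun_pair_image (w1 w2 : W) :
  [set ffun_pair w1 w2 j | j in 'I_2] = [set w1; w2].
Proof.
apply/setP => w; apply/imsetP/set2P.
  by case=> j _ ->; rewrite ffunE; case: ifP => _; [left | right].
by case=> ->; [exists ord0 | exists ord_max]; rewrite // ffunE.
Qed.

Lemma set3_completions (i a b w1 w2 : W) : a != b -> a != i -> b != i ->
  ([set i; w1; w2] == [set i; a; b]) = ((w1, w2) \in [set (a, b); (b, a)]).
Proof.
move=> ab ai bi; rewrite !inE !xpair_eqE; apply/eqP/idP => [E1|].
  have : a \in [set i; w1; w2] by rewrite E1 !inE eqxx !orbT.
  have : b \in [set i; w1; w2] by rewrite E1 !inE eqxx !orbT.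
  rewrite !inE (negbTE ai) (negbTE bi) /= => /orP[] /eqP Hb /orP[] /eqP Ha;
    subst; rewrite ?eqxx ?orbT //; by move: ab; rewrite eqxx.
case/orP=> /andP[/eqP-> /eqP->] //.
by apply/setP => w; rewrite !inE orbAC.
Qed.

Lemma sum_completions (x : W -> C) (i : W) (e : {set W}) : #|e| = 3 ->
  \sum_w1 \sum_w2 (if [set i; w1; w2] == e then x w1 * x w2 else 0)
  = if i \in e then 2 * \prod_(w in e :\ i) x w else 0.
Proof.
move=> e3; case: ifPn => [ie | notie]; last first.
  apply: big1 => w1 _; apply: big1 => w2 _.
  by case: eqP => // E1; move: notie; rewrite -E1 !inE eqxx.
have /cards2P [a [b [ab Eab]]] : #|e :\ i| == 2.
  by move: e3; rewrite (cardsD1 i) ie add1n => -[->].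
have := setD1K ie; rewrite Eab => Ee.
have : (a \in e :\ i) && (b \in e :\ i) by rewrite Eab !inE !eqxx orbT.
rewrite !in_setD1 => /andP [/andP [ai _] /andP [bi _]].
rewrite big_setU1 ?big_set1 ?inE //= -Ee pair_big /=.
rewrite (eq_bigr (fun p => if p \in [set (a, b); (b, a)] then x p.1 * x p.2 else 0))
  => [|[w1 w2] _]; last by rewrite /= setUA set3_completions.
rewrite -big_mkcond big_setU1 ?big_set1 ?inE ?xpair_eqE ?(negbTE ab) //=.
by rewrite [x b * _]mulrC -mulr2n mulr_natl.
Qed.

Variable E : {set {set W}}.
Hypothesis E3 : forall e, e \in E -> #|e| = 3.

(* Contracting the adjacency tensor of a 3-uniform hypergraph against x ⊗ x:
   vertex i collects, over the edges through i, the product of x on the other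
   two vertices (the 1/2! in the tensor cancels the two orderings). *)
Lemma adjT3_contraction (x : W -> C) (i : W) :
  \sum_(f : {ffun 'I_2 -> W}) @adjT C W E 3 i f * \prod_(j < 2) x (f j)
  = \sum_(e in E | i \in e) \prod_(w in e :\ i) x w.
Proof.
have term w1 w2 : @adjT C W E 3 i (ffun_pair w1 w2) *
      \prod_(j < 2) x (ffun_pair w1 w2 j)
    = 2^-1 * \sum_(e in E) if [set i; w1; w2] == e then x w1 * x w2 else 0.
  rewrite /adjT ffun_pair_image setUA !big_ord_recl big_ord0 mulr1 !ffunE /=.
  case: ifPn => [S_E | S_notE]; last first.
    rewrite mul0r big1 ?mulr0 // => e eE.
    by case: eqP => // Se; rewrite Se eE in S_notE.
  rewrite (bigD1 _ S_E) /= eqxx big1 ?addr0 // => e /andP [_ /negbTE].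
  by rewrite eq_sym => ->.
rewrite sum_ffun_pair.
under eq_bigr => w1 _ do under eq_bigr => w2 _ do rewrite term.
under eq_bigr => w1 _ do rewrite -mulr_sumr exchange_big.
rewrite -mulr_sumr exchange_big mulr_sumr big_mkcondr /=.
apply: eq_bigr => e eE; rewrite sum_completions ?E3 //.
by case: ifP; rewrite ?mulr0 // mulrA mulVf ?mul1r // pnatr_eq0.
Qed.

Lemma hyp3_eigenvalueP (lam : C) :
  hyp_eigenvalue E 3 lam <-> exists x : W -> C, (exists v, x v != 0) /\
    forall i, \sum_(e in E | i \in e) \prod_(w in e :\ i) x w = lam * x i ^+ 2.
Proof.
by split=> -[x [nz eig]]; exists x; split=> // i;
  rewrite -eig ?adjT3_contraction // -adjT3_contraction.
Qed.

End ThreeUniform.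

Lemma inl_eqE (A B : eqType) (x y : A) : (inl x == inl y :> A + B) = (x == y).
Proof. by apply/eqP/eqP => [[]|->]. Qed.

Lemma inr_eqE (A B : eqType) (x y : B) : (inr x == inr y :> A + B) = (x == y).
Proof. by apply/eqP/eqP => [[]|->]. Qed.

Lemma inl_inr_eqE (A B : eqType) (x : A) (y : B) : (inl x == inr y) = false.
Proof. by []. Qed.

Section PowerGraph.
Variables (C : numClosedFieldType) (V : finType) (G : rel V).
Hypotheses (G_sym : symmetric G) (G_irr : irreflexive G).

Local Notation W := (pvert G 3).

Lemma gedgesP (e : {set V}) :
  reflect (exists a b, G a b /\ e = [set a; b]) (e \in gedges G).
Proof.
rewrite inE; apply: (iffP existsP) => [[a /existsP [b /andP [Gab /eqP ->]]]|].
  by exists a, b.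
by case=> a [b [Gab ->]]; exists a; apply/existsP; exists b; rewrite Gab eqxx.
Qed.

Lemma new_vertex_unique (q1 q2 : {p : {set V} * 'I_(3 - 2) | p.1 \in gedges G}) :
  (sval q1).1 = (sval q2).1 -> q1 = q2.
Proof.
case: q1 q2 => [[e1 j1] H1] [[e2 j2] H2] /= E12; apply: val_inj => /=.
by rewrite E12 [j1]ord1 [j2]ord1.
Qed.

Definition edge_vertex {e : {set V}} (He : e \in gedges G) : W :=
  inr (exist _ (e, ord0) He).

Lemma pedge3E (e : {set V}) (He : e \in gedges G) (a b : V) : e = [set a; b] ->
  pedge G 3 e = [set inl a; inl b; edge_vertex He].
Proof.
move=> Ee; apply/setP => -[c | [[e' j] He']]; rewrite !inE /=.
  have -> : (c \in e) = (c \in [set a; b]) by rewrite Ee.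
  by rewrite !inl_eqE inl_inr_eqE orbF !inE.
by rewrite inr_eqE; apply/eqP/eqP => [Ee' | [] //]; apply: new_vertex_unique.
Qed.

(* Distinct edges of G give distinct hyperedges, as they differ on old vertices. *)
Lemma pedge_inj : injective (pedge G 3).
Proof.
move=> e1 e2 E12; apply/setP => u.
by have := congr1 (fun S : {set W} => inl u \in S) E12; rewrite !inE.
Qed.

(* G^(3) is 3-uniform: a, b and the new vertex are distinct since G is loopless. *)
Lemma power_edge_card (e : {set W}) : e \in power_edges G 3 -> #|e| = 3.
Proof.
case/imsetP => e0 He0 ->; case/gedgesP: (He0) => a [b [Gab Eab]].
rewrite (pedge3E He0 Eab) setUC !cardsU1 cards1 !inE.
rewrite ![edge_vertex _ == _]eq_sym !inl_inr_eqE inl_eqE.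
by case: eqP Gab => [-> | _]; rewrite ?G_irr.
Qed.

Lemma sum_power_edges (F : {set W} -> C) (P : pred {set W}) :
  \sum_(e in power_edges G 3 | P e) F e
  = \sum_(e in gedges G | P (pedge G 3 e)) F (pedge G 3 e).
Proof.
rewrite big_mkcondr big_imset /= ?big_mkcondr //.
by move=> e1 e2 _ _; apply: pedge_inj.
Qed.

Definition lift_vec (y : V -> C) (z : {set V} -> C) (w : W) : C :=
  match w with inl u => y u | inr q => z (sval q).1 end.

Lemma new_vertex_contraction (y : V -> C) (z : {set V} -> C) q :
  \sum_(e in power_edges G 3 | inr q \in e) \prod_(w in e :\ inr q) lift_vec y z w
  = \prod_(c in (sval q).1) y c.
Proof.
have He := svalP q; rewrite sum_power_edges.
rewrite (eq_bigl (pred1 (sval q).1)) => [|e]; last first.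
  by rewrite /= [inr q \in _]inE [e == _]eq_sym andb_idl // => /eqP <-.
rewrite big_pred1_eq.
have -> : pedge G 3 (sval q).1 :\ inr q = inl @: (sval q).1.
  apply/setP => -[c | q']; rewrite !inE.
    by rewrite inl_inr_eqE (mem_imset _ _ (@inl_inj _ _)).
  have -> : (inr q' \in inl @: (sval q).1) = false by apply/imsetP => -[].
  rewrite inr_eqE; case: ((sval q').1 =P (sval q).1) => [/new_vertex_unique -> | _].
    by rewrite eqxx.
  by rewrite andbF.
by rewrite big_imset //; move=> c1 c2 _ _ [].
Qed.

Lemma old_vertex_contraction (y : V -> C) (z : {set V} -> C) u :
  \sum_(e in power_edges G 3 | inl u \in e) \prod_(w in e :\ inl u) lift_vec y z w
  = \sum_(v | G u v) y v * z [set u; v].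
Proof.
have edges_at_u :
    [set e in gedges G | u \in e] = [set [set u; v] | v in [set v | G u v]].
  apply/setP => e; rewrite inE.
  apply/andP/imsetP => [[/gedgesP [a [b [Gab ->]]]] | [v]].
    rewrite !inE => /orP [] /eqP Eu; subst u; first by exists b; rewrite ?inE.
    by exists a; rewrite ?inE 1?G_sym // setUC.
  rewrite inE => Guv ->; split; last by rewrite !inE eqxx.
  by apply/gedgesP; exists u, v.
rewrite sum_power_edges (eq_bigl (mem [set e in gedges G | u \in e])) => [|e];
  last by rewrite !inE.
rewrite edges_at_u big_imset => [|v1 v2]; last first.
  rewrite !inE => Guv1 _ E12.
  have : v1 \in [set u; v2] by rewrite -E12 !inE eqxx orbT.
  by rewrite !inE => /orP [/eqP v1u | /eqP //]; rewrite v1u G_irr in Guv1.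
apply: eq_big => [v | v]; first by rewrite inE.
rewrite inE => Guv; have He : [set u; v] \in gedges G by apply/gedgesP; exists u, v.
have uv : u != v by apply: contraTneq Guv => ->; rewrite G_irr.
rewrite (pedge3E He (erefl _)) -setUA setU1K; last first.
  by rewrite !inE inl_eqE [_ == edge_vertex _]inl_inr_eqE orbF.
by rewrite big_setU1 ?big_set1 ?inE ?inl_inr_eqE.
Qed.

Lemma power3_eigenvalue (lam : C) (y : V -> C) (z : {set V} -> C) :
  (exists u, y u != 0) ->
  (forall e, e \in gedges G -> \prod_(c in e) y c = lam * z e ^+ 2) ->
  (forall u, \sum_(v | G u v) y v * z [set u; v] = lam * y u ^+ 2) ->
  hyp_eigenvalue (power_edges G 3) 3 lam.
Proof.
move=> [u0 yu0] edge_eq vertex_eq.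
apply: (proj2 (hyp3_eigenvalueP power_edge_card lam)).
exists (lift_vec y z); split; first by exists (inl u0).
case=> [u | q]; first by rewrite old_vertex_contraction vertex_eq.
by rewrite new_vertex_contraction (edge_eq _ (svalP q)).
Qed.

(* The eigenvector takes
   the value a_u^2 at u and (-1)^neg(e) a_u a_v / mu at the new vertex of
   e = {u, v}, where a_u is a cube root of z u. *)
Lemma signed_lift (mu : C) (neg : {set V} -> bool) (z : V -> C) :
  mu != 0 -> (exists u, z u != 0) ->
  (forall u, \sum_(v | G u v) (-1) ^+ neg [set u; v] * z v = mu ^+ 3 * z u) ->
  hyp_eigenvalue (power_edges G 3) 3 (mu ^+ 2).
Proof.
move=> mu0 [u0 zu0] signed_eig.
pose a u := 3.-root (z u).
have a3 u : a u ^+ 3 = z u by apply: rootCK.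
apply: (@power3_eigenvalue _ (fun u => a u ^+ 2)
          (fun e => (-1) ^+ neg e * \prod_(c in e) a c / mu)).
- exists u0; rewrite expf_neq0 //; apply: contraNneq zu0 => au0.
  by rewrite -a3 au0 expr0n.
- move=> e _; rewrite prodrXl !exprMn sqrr_sign mul1r exprVn.
  by field.
- move=> u.
  transitivity (a u / mu * \sum_(v | G u v) (-1) ^+ neg [set u; v] * z v).
    rewrite mulr_sumr; apply: eq_bigr => v Guv.
    have uv : u != v by apply: contraTneq Guv => ->; rewrite G_irr.
    rewrite big_setU1 ?big_set1 ?inE //= -a3.
    by field.
  by rewrite signed_eig -a3; field.
Qed.

End PowerGraph.

Lemma complete_mx_eigenvalue (F : fieldType) (m : nat) (b : F) :
  eigenvalue (\matrix_(i, j) (i != j)%:R : 'M[F]_m) b -> b = -1 \/ b + 1 = m%:R.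
Proof.
case/eigenvalueP => v eig v0.
have [-> | b_neq] := eqVneq b (-1); [by left | right].
have b1 : b + 1 != 0 by rewrite addr_eq0.
pose s := \sum_j v 0 j.
(* column j of v A = b v reads s - v_j = b v_j *)
have coord j : (b + 1) * v 0 j = s.
  have e := congr1 (fun M : 'M_(1, m) => M 0 j) eig; rewrite !mxE /= in e.
  rewrite mulrDl mul1r -e (bigD1 j) //= mxE eqxx mulr0 add0r.
  rewrite /s [in RHS](bigD1 j) //= addrC.
  by congr (_ + _); apply: eq_bigr => i ij; rewrite mxE ij mulr1.
have s0 : s != 0.
  apply: contraNneq v0 => s0; apply/eqP/rowP => j; rewrite mxE.
  by apply/eqP; move/eqP: (coord j); rewrite s0 mulf_eq0 (negbTE b1).
apply: (mulIf s0); rewrite mulr_natl -[in s *+ _](card_ord m) -sumr_const /s mulr_sumr.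
by apply: eq_bigr => j _; rewrite coord.
Qed.

(* sqrt 5 - 1 is not a natural number: k^2 = 2k + 4 has no solution in nat. *)
Lemma sqrt5_pred_not_nat (R : numDomainType) (b : R) (k : nat) :
  b + 1 = k%:R -> b ^+ 2 != 5%:R.
Proof.
move=> bk; apply/eqP => b2.
have : (k ^ 2)%:R = (2 * k + 4)%:R :> R.
  rewrite natrX natrD natrM -bk; apply/eqP; rewrite -subr_eq0.
  have -> : (b + 1) ^+ 2 - (2%:R * (b + 1) + 4%:R) = b ^+ 2 - 5%:R by ring.
  by rewrite b2 subrr.
move/eqP; rewrite eqr_nat => /eqP.
by case: k {bk} => [|[|[|[|k]]]] //; nia.
Qed.

Section K4.
Variable C : numClosedFieldType.

Lemma K4_sym : symmetric K4.
Proof. by move=> x y; rewrite /K4 eq_sym. Qed.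

Lemma K4_irr : irreflexive K4.
Proof. by move=> x; rewrite /K4 eqxx. Qed.

Definition K4_neg (S : {set 'I_4}) : bool := (0 \in S) && (1 \in S).

Definition K4_vec (b : C) (u : 'I_4) : C := if (u < 2)%N then 2 else b + 1.

Lemma K4_signed_eigvec (b : C) : b ^+ 2 = 5%:R -> forall u,
  \sum_(v | K4 u v) (-1) ^+ K4_neg [set u; v] * K4_vec b v = b * K4_vec b u.
Proof.
move=> b2 u; rewrite big_mkcond /= !big_ord_recl big_ord0 /K4_neg /K4_vec.
case: u => [[|[|[|[|//]]]] Hu]; rewrite !inE /=; try ring.
all: by transitivity (b ^+ 2 + b); [rewrite b2; ring | ring].
Qed.

(* Part 1: the cube root of 5 is an eigenvalue of K_4^(3), obtained by
   lifting the signed eigenvector with mu = sqrt(5^(1/3)), b = mu^3. *)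
Lemma K4_power_eigenvalue :
  hyp_eigenvalue (power_edges K4 3) 3 (3.-root (5%:R : C)).
Proof.
set lam := 3.-root _.
have lam3 : lam ^+ 3 = 5%:R by apply: rootCK.
have lam0 : lam != 0.
  by apply: contra_eq_neq lam3 => ->; rewrite expr0n eq_sym pnatr_eq0.
rewrite -(sqrtCK lam); set mu := sqrtC lam.
have mu0 : mu != 0.
  by apply: contraNneq lam0 => mu_0; rewrite -(sqrtCK lam) -/mu mu_0 expr0n.
apply: (signed_lift K4_sym K4_irr (neg := K4_neg) (z := K4_vec (mu ^+ 3)) mu0).
  by exists 0; rewrite /K4_vec /= pnatr_eq0.
by apply: K4_signed_eigvec; rewrite -exprM mulnC exprM sqrtCK lam3.
Qed.

Lemma induced_adj_K4 (S : {set 'I_4}) :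
  induced_adj K4 C S = \matrix_(i, j) (i != j)%:R.
Proof. by apply/matrixP => i j; rewrite !mxE /K4 (inj_eq enum_val_inj). Qed.

End K4.

Theorem mainTheorem3 (C : numClosedFieldType) :
  hyp_eigenvalue (power_edges K4 3) 3 (3.-root (5%:R : C)) /\
  ~ (exists (S : {set 'I_4}) (b : C),
        b ^+ 2 = 5%:R /\ eigenvalue (induced_adj K4 C S) b).
Proof.
split; first exact: K4_power_eigenvalue.
case=> S [b [b2 eig]]; rewrite induced_adj_K4 in eig.
have [b_m1 | b_card] := complete_mx_eigenvalue eig; move/eqP: b2; apply/negP.
  by apply: (sqrt5_pred_not_nat (k := 0)); rewrite b_m1 addNr.
exact: sqrt5_pred_not_nat b_card.
Qed.
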